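(* Let $M$ be a system execution satisfying the Lazy Set axioms A0, A1, A2. If $Z$ is an event with $\mathrm{Add}^1(Z)$ or $\mathrm{Rem}^1(Z)$, then $\gamma(Z)<Z$.
   Context: A system execution $M$ consists of: a set of events, partitioned into low-level events (actions) and high-level events; unary predicates $\mathrm{Add},\mathrm{Rem},\mathrm{Cnt}$ on events; a partial order $<$ on events in which every event has finitely many predecessors (and Lamport's finiteness property: for every event $x$ there is a finite set $E$ with $x<y$ for all events $y\notin E$); functions $\mathrm{Begin},\mathrm{End}$ from events to actions with $\mathrm{Begin}(e)=\mathrm{End}(e)=e$ for actions $e$; functions $\chi$ (events $\to\{0,1,f\}$), $\mathrm{val}$ (events $\to\mathbb N$), $\gamma$ (events $\to$ events). For events $X,Y$, $X<Y$ iff $\mathrm{End}(X)<\mathrm{Begin}(Y)$. Notation: $\mathrm{Add}^p(a)$ abbreviates $\mathrm{Add}(a)\wedge\chi(a)=p$, similarly $\mathrm{Rem}^p,\mathrm{Cnt}^p$; $\mathrm{Op}^p(a)$ abbreviates $(\mathrm{Add}(a)\vee\mathrm{Rem}(a)\vee\mathrm{Cnt}(a))\wedge\chi(a)=p$ for $p\in\{0,1\}$. A0: $\mathrm{Add},\mathrm{Rem},\mathrm{Cnt}$ pairwise disjoint; $\mathrm{Add},\mathrm{Rem}$ events are actions, $\mathrm{Cnt}$ events are high-level; $\mathrm{Begin}(X),\mathrm{End}(X)$ are actions; for $\mathrm{Cnt}$ events $E$, $\mathrm{Begin}(E)<\mathrm{End}(E)$; $<$ restricted to actions is linear. A1: for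 every $A$ with $\mathrm{Op}^1(A)$: $\mathrm{Add}^0(\gamma(A))$, $\mathrm{val}(\gamma(A))=\mathrm{val}(A)$, $\gamma(A)<\mathrm{End}(A)$, and no $R$ has $\mathrm{Rem}^1(R)$, $\gamma(R)=\gamma(A)$, $\gamma(A)<R<A$. A2: if $\mathrm{Op}^0(B)$, $\mathrm{Add}^0(A)$, $A<B$, $\mathrm{val}(A)=\mathrm{val}(B)$, then some $R$ has $\mathrm{Rem}^1(R)$, $A=\gamma(R)$, $R<\mathrm{End}(B)$. *)

From Stdlib Require Import List.

Inductive chival : Type := c0 | c1 | cf.

Record sys_exec : Type := {
  Ev : Type;
  action : Ev -> Prop;                (* low-level events; the others are high-level *)
  Add : Ev -> Prop;
  Rem : Ev -> Prop;
  Cnt : Ev -> Prop;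
  lt : Ev -> Ev -> Prop;
  Begin : Ev -> Ev;
  End : Ev -> Ev;
  chi : Ev -> chival;
  val : Ev -> nat;
  gamma : Ev -> Ev;
  lt_irrefl : forall x, ~ lt x x;
  lt_trans : forall x y z, lt x y -> lt y z -> lt x z;
  lt_fin_pred : forall x, exists l : list Ev, forall y, lt y x -> In y l;
  lt_lamport : forall x, exists l : list Ev, forall y, ~ In y l -> lt x y;
  Begin_action : forall e, action e -> Begin e = e;
  End_action : forall e, action e -> End e = e;
  lt_BeginEnd : forall X Y, lt X Y <-> lt (End X) (Begin Y)
}.

Arguments action {_}. Arguments Add {_}. Arguments Rem {_}. Arguments Cnt {_}.
Arguments lt {_}. Arguments Begin {_}. Arguments End {_}. Arguments chi {_}.
Arguments val {_}. Arguments gamma {_}.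

Definition AddP {M : sys_exec} (p : chival) (a : Ev M) := Add a /\ chi a = p.
Definition RemP {M : sys_exec} (p : chival) (a : Ev M) := Rem a /\ chi a = p.
Definition CntP {M : sys_exec} (p : chival) (a : Ev M) := Cnt a /\ chi a = p.
Definition OpP {M : sys_exec} (p : chival) (a : Ev M) :=
  (Add a \/ Rem a \/ Cnt a) /\ chi a = p.

Definition A0 (M : sys_exec) : Prop :=
  (forall e : Ev M, ~ (Add e /\ Rem e) /\ ~ (Add e /\ Cnt e) /\ ~ (Rem e /\ Cnt e)) /\
  (forall e : Ev M, Add e -> action e) /\
  (forall e : Ev M, Rem e -> action e) /\
  (forall e : Ev M, Cnt e -> ~ action e) /\
  (forall X : Ev M, action (Begin X) /\ action (End X)) /\
  (forall E : Ev M, Cnt E -> lt (Begin E) (End E)) /\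
  (forall a b : Ev M, action a -> action b -> lt a b \/ a = b \/ lt b a).

Definition A1 (M : sys_exec) : Prop :=
  forall A : Ev M, OpP c1 A ->
    AddP c0 (gamma A) /\ val (gamma A) = val A /\ lt (gamma A) (End A) /\
    ~ (exists R : Ev M, RemP c1 R /\ gamma R = gamma A /\ lt (gamma A) R /\ lt R A).

Definition A2 (M : sys_exec) : Prop :=
  forall A B : Ev M, OpP c0 B -> AddP c0 A -> lt A B -> val A = val B ->
    exists R : Ev M, RemP c1 R /\ A = gamma R /\ lt R (End B).

From Stdlib Require Import List.

Lemma OpP_of_AddP_or_RemP {M : sys_exec} (p : chival) (Z : Ev M) :
  AddP p Z \/ RemP p Z -> OpP p Z.
Proof.
  intros [[HAdd Hchi] | [HRem Hchi]]; split; auto.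
Qed.

Lemma action_of_AddP_or_RemP {M : sys_exec} (h0 : A0 M) (p : chival) (Z : Ev M) :
  AddP p Z \/ RemP p Z -> action Z.
Proof.
  destruct h0 as [_ [Add_action [Rem_action _]]].
  intros [[HAdd _] | [HRem _]]; auto.
Qed.

Lemma gamma_lt_End {M : sys_exec} (h1 : A1 M) (A : Ev M) :
  OpP c1 A -> lt (gamma A) (End A).
Proof.
  intros HA.
  destruct (h1 A HA) as [_ [_ [Hlt _]]].
  exact Hlt.
Qed.

Theorem lemma3p3 (M : sys_exec) (h0 : A0 M) (h1 : A1 M) (h2 : A2 M) (Z : Ev M) :
  AddP c1 Z \/ RemP c1 Z -> lt (gamma Z) Z.
Proof.
  intros HZ.
  pose proof (gamma_lt_End h1 Z (OpP_of_AddP_or_RemP c1 Z HZ)) as Hlt.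
  rewrite (End_action M Z (action_of_AddP_or_RemP h0 c1 Z HZ)) in Hlt.
  exact Hlt.
Qed.
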